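(* For all processes $s,t$ of a PTS, $s$ and $t$ are strong probabilistic trace equivalent if and only if $\mathcal{L}(s)=\mathcal{L}(t)$.
   Context: PTS $(\mathcal{S},A,\to)$ with finitely supported distributions; processes image-finite and finite. Computations $c=s_0\xrightarrow{a_1}\cdots\xrightarrow{a_n}s_n$ via transitions $s_{i-1}\xrightarrow{a_i}\pi_i$, $s_i\in\mathrm{supp}(\pi_i)$; $\Pr(c)=\prod\pi_i(s_i)$ (empty computation: 1); $|c|=n$; $\mathrm{tr}(c)=a_1\cdots a_n$; $\mathcal{C}(z,\alpha)$ = computations from $z$ with trace $\alpha$; maximal = not a proper prefix of another computation from the same process; $\mathcal{C}_{\max}(z)$; $\Pr$ of a set is the sum. A resolution of $s$ is a PTS $\mathcal{Z}=(Z,A,\to_{\mathcal{Z}})$ with $\mathrm{corr}\colon Z\to\mathcal{S}$ and initial state $z_s$, $\mathrm{corr}(z_s)=s$, such that $z_s$ is in no target support, every other state is in the support of a target of a transition from a different state, every $z\xrightarrow{a}_{\mathcal{Z}}\pi$ is matched by $\mathrm{corr}(z)\xrightarrow{a}\pi'$ with $\pi(z')=\pi'(\mathrm{corr}(z'))$, and each state has at most one outgoing transition; $\mathrm{res}(s)$ is the set of resolutions. $s,t$ are strong probabilistic trace equivalent iff for each $\mathcal{Z}_s\in\mathrm{res}(s)$ (initial state $z_s$) there is $\mathcal{Z}_t\in\mathrm{res}(t)$ (initial state $z_t$) with $\Pr(\mathcal{C}(z_s,\alpha))=\Pr(\mathcal{C}(z_t,\alpha))$ for all $\alpha\in A^\star$,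 and symmetrically with $s,t$ swapped. Logic $\mathcal{L}$: trace formulae $\Phi::=\top\mid\langle a\rangle\Phi$, $\mathrm{depth}(\top)=0$, $\mathrm{depth}(\langle a\rangle\Phi)=1+\mathrm{depth}(\Phi)$; trace distribution formulae $\bigoplus_{i\in I}r_i\Phi_i$ ($I$ finite nonempty, $\Phi_i$ pairwise distinct, $r_i\in(0,1]$, $\sum r_i=1$), identified with distributions on trace formulae. $c\models\top$ always; $c\models\langle a\rangle\Phi$ iff $c=s\xrightarrow{a}c'$ with $c'\models\Phi$. $s\models\bigoplus_i r_i\Phi_i$ iff some $\mathcal{Z}\in\mathrm{res}(s)$ with initial state $z$ satisfies $\Pr(\{c\in\mathcal{C}_{\max}(z):c\models\Phi_i,|c|=\mathrm{depth}(\Phi_i)\})=r_i$ for all $i$. $\mathcal{L}(s)$ is the set of trace distribution formulae satisfied by $s$. *)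

From Stdlib Require Import Reals List.
Import ListNotations.
Open Scope R_scope.
Set Implicit Arguments.

Section PTS.
Variables (St A : Type).

Definition lsum {X : Type} (f : X -> R) (l : list X) : R :=
  fold_right Rplus 0 (map f l).

Definition is_fdist {X : Type} (pi : X -> R) : Prop :=
  (forall x, 0 <= pi x) /\
  exists l : list X, NoDup l /\ (forall x, pi x <> 0 -> In x l) /\ lsum pi l = 1.

Definition transrel (X : Type) := X -> A -> (X -> R) -> Prop.

Definition is_PTS {X : Type} (tr : transrel X) : Prop :=
  forall x a pi, tr x a pi -> is_fdist pi.

(** A computation from x0 is the list of its steps (a_i, pi_i, s_i):
    s_{i-1} --a_i--> pi_i and s_i in supp(pi_i). *)
Definition step (X : Type) := (A * (X -> R) * X)%type.

Fixpoint is_comp {X : Type} (tr : transrel X) (x : X) (c : list (step X)) : Prop :=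
  match c with
  | [] => True
  | (a, pi, x') :: c' => tr x a pi /\ 0 < pi x' /\ is_comp tr x' c'
  end.

Definition comp_pr {X : Type} (c : list (step X)) : R :=
  fold_right Rmult 1 (map (fun st => match st with (_, pi, x') => pi x' end) c).

Definition comp_tr {X : Type} (c : list (step X)) : list A :=
  map (fun st => match st with (a, _, _) => a end) c.

Definition comp_max {X : Type} (tr : transrel X) (x : X) (c : list (step X)) : Prop :=
  is_comp tr x c /\
  ~ (exists d, d <> [] /\ is_comp tr x (c ++ d)).

Definition PrSet {X : Type} (P : list (step X) -> Prop) (r : R) : Prop :=
  exists l, NoDup l /\ (forall c, P c <-> In c l) /\ r = lsum (@comp_pr X) l.

Definition Ctr {X : Type} (tr : transrel X) (z : X) (alpha : list A) :
  list (step X) -> Prop :=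
  fun c => is_comp tr z c /\ comp_tr c = alpha.

Definition succ (tr : transrel St) (u v : St) : Prop :=
  exists a pi, tr u a pi /\ 0 < pi v.

Inductive reach (tr : transrel St) : St -> St -> Prop :=
| reach_refl u : reach tr u u
| reach_step u v w : succ tr u v -> reach tr v w -> reach tr u w.

Definition reach_plus (tr : transrel St) (u w : St) : Prop :=
  exists v, succ tr u v /\ reach tr v w.

Definition image_finite (tr : transrel St) : Prop :=
  forall s a, exists l : list (St -> R), forall pi, tr s a pi -> In pi l.

Definition finite_proc (tr : transrel St) (s : St) : Prop :=
  (exists l : list St, forall u, reach tr s u -> In u l) /\
  (forall u, reach tr s u ->
     exists l : list (A * (St -> R)), forall a pi, tr u a pi -> In (a, pi) l) /\
  (forall u, reach tr s u -> ~ reach_plus tr u u).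

Record resolution (tr : transrel St) (s : St) := {
  rZ : Type;
  rtrans : transrel rZ;
  rcorr : rZ -> St;
  rinit : rZ;
  r_pts : is_PTS rtrans;
  r_init_corr : rcorr rinit = s;
  r_init_root : forall z a pi, rtrans z a pi -> ~ (0 < pi rinit);
  r_others : forall z, z <> rinit ->
     exists z0 a pi, z0 <> z /\ rtrans z0 a pi /\ 0 < pi z;
  r_match : forall z a pi, rtrans z a pi ->
     exists pi', tr (rcorr z) a pi' /\ forall z', pi z' = pi' (rcorr z');
  r_det : forall z a1 pi1 a2 pi2, rtrans z a1 pi1 -> rtrans z a2 pi2 ->
     a1 = a2 /\ pi1 = pi2
}.

Definition res_trace_matched (tr : transrel St) (s t : St) : Prop :=
  forall Zs : resolution tr s, exists Zt : resolution tr t,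
    forall alpha : list A, exists r,
      PrSet (Ctr (rtrans Zs) (rinit Zs) alpha) r /\
      PrSet (Ctr (rtrans Zt) (rinit Zt) alpha) r.

Definition sptrace_equiv (tr : transrel St) (s t : St) : Prop :=
  res_trace_matched tr s t /\ res_trace_matched tr t s.

Inductive tformula : Type :=
| TTop : tformula
| TDiam : A -> tformula -> tformula.

Fixpoint depth (f : tformula) : nat :=
  match f with TTop => 0%nat | TDiam _ f' => S (depth f') end.

Fixpoint csat {X : Type} (c : list (step X)) (f : tformula) : Prop :=
  match f with
  | TTop => True
  | TDiam a f' => match c with
                  | [] => False
                  | (a', _, _) :: c' => a' = a /\ csat c' f'
                  end
  end.

(** trace distribution formula  (+)_i r_i Phi_i, as a list of pairs (r_i, Phi_i) *)
Definition tdformula := list (R * tformula).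

Definition wf_tdformula (F : tdformula) : Prop :=
  F <> [] /\ NoDup (map snd F) /\
  (forall r f, In (r, f) F -> 0 < r <= 1) /\
  lsum fst F = 1.

Definition psat (tr : transrel St) (s : St) (F : tdformula) : Prop :=
  exists Z : resolution tr s,
    forall r f, In (r, f) F ->
      PrSet (fun c => comp_max (rtrans Z) (rinit Z) c /\ csat c f /\
                      length c = depth f) r.

Definition Lset (tr : transrel St) (s : St) : tdformula -> Prop :=
  fun F => wf_tdformula F /\ psat tr s F.

End PTS.

(* A resolution of a finite process is a deterministic PTS of bounded depth, so
   its computations can be enumerated and every probability is a finite sum.
   For such a PTS the trace distribution [al |-> Pr(C(z, al))] and the
   maximal-trace distribution [al |-> Pr(maximal computations with trace al)]
   determine each other: Pr(C(z, al)) is the mass of the maximal computations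
   whose trace extends [al], and the maximal mass at [al] is Pr(C(z, al)) minus
   the probability of the traces [al ++ [e]].  A trace formula
   <a1>...<an>T matched against maximal computations of length n reads off
   exactly the maximal-trace probability of a1...an, so L(s) is the set of
   maximal-trace distributions of the resolutions of s.  Conversely, the formula
   built from the maximal-trace distribution of a resolution of s can only be
   satisfied by a resolution of t with the same distribution: the two agree on
   a support of total mass 1, and a maximal-trace distribution has mass at
   most 1. *)

From Stdlib Require Import Reals List ClassicalEpsilon Classical Permutation Lra Lia.
Import ListNotations.
Open Scope R_scope.

Definition indic (P : Prop) (x : R) : R :=
  if excluded_middle_informative P then x else 0.

Lemma indic_T (P : Prop) x : P -> indic P x = x.
Proof. unfold indic; destruct excluded_middle_informative; tauto. Qed.

Lemma indic_F (P : Prop) x : ~ P -> indic P x = 0.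
Proof. unfold indic; destruct excluded_middle_informative; tauto. Qed.

Lemma indic_iff (P Q : Prop) x : (P <-> Q) -> indic P x = indic Q x.
Proof. unfold indic; do 2 destruct excluded_middle_informative; tauto. Qed.

Lemma indic_and (P Q : Prop) x : indic (P /\ Q) x = indic Q (indic P x).
Proof. unfold indic; repeat destruct excluded_middle_informative; tauto. Qed.

Lemma indic_ge0 (P : Prop) x : 0 <= x -> 0 <= indic P x.
Proof. unfold indic; destruct excluded_middle_informative; lra. Qed.

Lemma indic_mulr (P : Prop) k x : indic P (k * x) = k * indic P x.
Proof. unfold indic; destruct excluded_middle_informative; ring. Qed.

Lemma indic_0 (P : Prop) : indic P 0 = 0.
Proof. unfold indic; destruct excluded_middle_informative; reflexivity. Qed.

Lemma indic_mono (P Q : Prop) x : (P -> Q) -> 0 <= x -> indic P x <= indic Q x.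
Proof. unfold indic; do 2 destruct excluded_middle_informative; intuition lra. Qed.

Definition decb (P : Prop) : bool := if excluded_middle_informative P then true else false.

Lemma decb_true (P : Prop) : decb P = true <-> P.
Proof. unfold decb; destruct excluded_middle_informative; intuition discriminate. Qed.

Definition deceq {T : Type} (x y : T) : {x = y} + {x <> y} :=
  excluded_middle_informative (x = y).

Section FiniteSums.
Context {T : Type}.
Implicit Types (f g : T -> R) (l : list T).

Lemma lsum_nil f : lsum f [] = 0.
Proof. reflexivity. Qed.

Lemma lsum_cons f x l : lsum f (x :: l) = f x + lsum f l.
Proof. reflexivity. Qed.

Lemma lsum_app f l1 l2 : lsum f (l1 ++ l2) = lsum f l1 + lsum f l2.
Proof. induction l1; cbn [app]; rewrite ?lsum_cons, ?IHl1, ?lsum_nil; ring. Qed.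

Lemma lsum_ext_in f g l : (forall x, In x l -> f x = g x) -> lsum f l = lsum g l.
Proof.
  induction l as [|x l IH]; intro H; [reflexivity|].
  rewrite !lsum_cons, H, IH; simpl; auto.
  intros; apply H; simpl; auto.
Qed.

Lemma lsum_plus f g l : lsum (fun x => f x + g x) l = lsum f l + lsum g l.
Proof. induction l; rewrite ?lsum_cons, ?IHl, ?lsum_nil; ring. Qed.

Lemma lsum_minus f g l : lsum (fun x => f x - g x) l = lsum f l - lsum g l.
Proof. induction l; rewrite ?lsum_cons, ?IHl, ?lsum_nil; ring. Qed.

Lemma lsum_scal f k l : lsum (fun x => k * f x) l = k * lsum f l.
Proof. induction l; rewrite ?lsum_cons, ?IHl, ?lsum_nil; ring. Qed.

Lemma lsum_zero f l : (forall x, In x l -> f x = 0) -> lsum f l = 0.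
Proof.
  intro H; rewrite (lsum_ext_in f (fun _ => 0)) by exact H.
  clear H; induction l; rewrite ?lsum_cons, ?IHl, ?lsum_nil; ring.
Qed.

Lemma lsum_le f g l : (forall x, In x l -> f x <= g x) -> lsum f l <= lsum g l.
Proof.
  induction l as [|x l IH]; intro H; rewrite ?lsum_cons, ?lsum_nil; [lra|].
  enough (f x <= g x /\ lsum f l <= lsum g l) by lra.
  split; [apply H; simpl; auto | apply IH; intros y Hy; apply H; simpl; auto].
Qed.

Lemma lsum_ge0 f l : (forall x, In x l -> 0 <= f x) -> 0 <= lsum f l.
Proof. intro H; rewrite <- (lsum_zero (fun _ => 0) l) by auto; now apply lsum_le. Qed.

Lemma lsum_in_le f l x : (forall y, In y l -> 0 <= f y) -> In x l -> f x <= lsum f l.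
Proof.
  induction l as [|y l IH]; intros Hge Hx; [destruct Hx|]; rewrite lsum_cons.
  assert (0 <= f y) by (apply Hge; simpl; auto).
  assert (0 <= lsum f l) by (apply lsum_ge0; intros; apply Hge; simpl; auto).
  destruct Hx as [<-|Hx]; [lra|].
  enough (f x <= lsum f l) by lra.
  apply IH; [intros; apply Hge; simpl|]; auto.
Qed.

Lemma lsum_perm f l1 l2 : Permutation l1 l2 -> lsum f l1 = lsum f l2.
Proof. induction 1; rewrite ?lsum_cons; [reflexivity | congruence | ring | congruence]. Qed.

Lemma lsum_filter f p l :
  lsum f (filter p l) = lsum (fun x => if p x then f x else 0) l.
Proof.
  induction l as [|x l IH]; [reflexivity|]; cbn [filter].
  rewrite lsum_cons, <- IH; destruct (p x); rewrite ?lsum_cons; ring.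
Qed.

End FiniteSums.

Lemma lsum_map {T U} (f : U -> R) (g : T -> U) l :
  lsum f (map g l) = lsum (fun x => f (g x)) l.
Proof. induction l; cbn [map]; rewrite ?lsum_cons, ?IHl; reflexivity. Qed.

Lemma lsum_flat_map {T U} (f : U -> R) (g : T -> list U) l :
  lsum f (flat_map g l) = lsum (fun x => lsum f (g x)) l.
Proof. induction l; cbn [flat_map]; rewrite ?lsum_app, ?lsum_cons, ?IHl; reflexivity. Qed.

Lemma lsum_swap {T U} (f : T -> U -> R) l1 l2 :
  lsum (fun x => lsum (f x) l2) l1 = lsum (fun y => lsum (fun x => f x y) l1) l2.
Proof.
  induction l1 as [|x l1 IH].
  - symmetry; apply lsum_zero; reflexivity.
  - rewrite lsum_cons, IH, <- lsum_plus; apply lsum_ext_in; reflexivity.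
Qed.

Lemma lsum_indic_eq {K} (ks : list K) k0 y : NoDup ks ->
  lsum (fun k => indic (k0 = k) y) ks = indic (In k0 ks) y.
Proof.
  induction 1 as [|k ks Hk _ IH].
  - now rewrite indic_F.
  - rewrite lsum_cons, IH; destruct (classic (k0 = k)) as [->|Hne].
    + rewrite indic_T, (indic_F (In k ks)), indic_T by (simpl; auto); ring.
    + rewrite indic_F by exact Hne; rewrite Rplus_0_l.
      apply indic_iff; simpl; intuition congruence.
Qed.

Lemma lsum_indic_in_fibres {T K} (g : T -> K) (w : T -> R) l ks : NoDup ks ->
  lsum (fun c => indic (In (g c) ks) (w c)) l =
  lsum (fun k => lsum (fun c => indic (g c = k) (w c)) l) ks.
Proof.
  intro Hks; rewrite <- lsum_swap; apply lsum_ext_in; intros c _.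
  now rewrite lsum_indic_eq.
Qed.

Lemma lsum_indic_eq_of_fibres_eq {T1 T2 K} (l1 : list T1) (l2 : list T2)
    (g1 : T1 -> K) (g2 : T2 -> K) (w1 : T1 -> R) (w2 : T2 -> R) :
  (forall k, lsum (fun c => indic (g1 c = k) (w1 c)) l1 =
             lsum (fun c => indic (g2 c = k) (w2 c)) l2) ->
  forall Q : K -> Prop,
  lsum (fun c => indic (Q (g1 c)) (w1 c)) l1 = lsum (fun c => indic (Q (g2 c)) (w2 c)) l2.
Proof.
  intros Hfib Q.
  set (ks := nodup deceq (filter (fun k => decb (Q k)) (map g1 l1 ++ map g2 l2))).
  assert (Hks : forall k, In k ks <-> Q k /\ (In k (map g1 l1) \/ In k (map g2 l2))).
  { intro k; unfold ks; now rewrite nodup_In, filter_In, decb_true, in_app_iff. }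
  transitivity (lsum (fun k => lsum (fun c => indic (g1 c = k) (w1 c)) l1) ks);
    [|transitivity (lsum (fun k => lsum (fun c => indic (g2 c = k) (w2 c)) l2) ks)].
  - rewrite <- lsum_indic_in_fibres by apply NoDup_nodup.
    apply lsum_ext_in; intros c Hc; apply indic_iff; rewrite Hks.
    pose proof (in_map g1 _ _ Hc); tauto.
  - now apply lsum_ext_in.
  - rewrite <- lsum_indic_in_fibres by apply NoDup_nodup.
    apply lsum_ext_in; intros c Hc; apply indic_iff; rewrite Hks.
    pose proof (in_map g2 _ _ Hc); tauto.
Qed.

Definition support_list {X : Type} (pi : X -> R) : list X :=
  match excluded_middle_informative (is_fdist pi) with
  | left H => filter (fun x => decb (0 < pi x))
                (proj1_sig (constructive_indefinite_description _ (proj2 H)))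
  | right _ => []
  end.

Lemma support_list_spec {X : Type} (pi : X -> R) : is_fdist pi ->
  NoDup (support_list pi) /\ (forall x, In x (support_list pi) <-> 0 < pi x) /\
  lsum pi (support_list pi) = 1.
Proof.
  intro Hpi; unfold support_list.
  destruct excluded_middle_informative as [H|]; [|tauto].
  destruct constructive_indefinite_description as [l [Hnd [Hin Hsum]]]; simpl.
  split; [now apply NoDup_filter|split].
  - intro x; rewrite filter_In, decb_true.
    split; [tauto|]; intro Hx; split; [apply Hin; lra | exact Hx].
  - rewrite lsum_filter, <- Hsum; apply lsum_ext_in; intros x _; unfold decb.
    destruct excluded_middle_informative; [reflexivity|].
    pose proof (proj1 H x); lra.
Qed.

Lemma fdist_exists_pos {X : Type} (pi : X -> R) : is_fdist pi -> exists x, 0 < pi x.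
Proof.
  intro Hpi; destruct (support_list_spec pi Hpi) as [_ [Hin Hsum]].
  destruct (support_list pi) as [|x l]; [rewrite lsum_nil in Hsum; lra|].
  exists x; apply Hin; simpl; auto.
Qed.

Lemma fdist_eq_of_eq_on_support {T : Type} (mu nu : T -> R) :
  is_fdist mu -> (forall x, 0 <= nu x) ->
  (forall l, NoDup l -> lsum nu l <= 1) ->
  (forall x, 0 < mu x -> nu x = mu x) -> forall x, nu x = mu x.
Proof.
  intros Hmu Hnu Hle Heq x.
  destruct (support_list_spec mu Hmu) as [Hnd [Hin Hsum]].
  destruct (Rlt_or_le 0 (mu x)) as [Hx|Hx]; [now apply Heq|].
  assert (Hmux : mu x = 0) by (pose proof (proj1 Hmu x); lra).
  assert (Hnotin : ~ In x (support_list mu)) by (rewrite Hin; lra).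
  pose proof (Hle _ (NoDup_cons _ Hnotin Hnd)) as Hcons.
  rewrite lsum_cons, (lsum_ext_in nu mu) in Hcons by (intros y Hy; apply Heq, Hin, Hy).
  specialize (Hnu x); lra.
Qed.

Lemma PrSet_lsum_indic {A X : Type} (P : list (step A X) -> Prop) l : NoDup l ->
  (forall c, P c -> In c l) -> PrSet P (lsum (fun c => indic (P c) (comp_pr c)) l).
Proof.
  intros Hnd HP; exists (filter (fun c => decb (P c)) l).
  split; [now apply NoDup_filter|split].
  - intro c; rewrite filter_In, decb_true; intuition.
  - rewrite lsum_filter; apply lsum_ext_in; intros c _; unfold indic, decb.
    now destruct excluded_middle_informative.
Qed.

Lemma PrSet_unique {A X : Type} (P : list (step A X) -> Prop) r1 r2 :
  PrSet P r1 -> PrSet P r2 -> r1 = r2.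
Proof.
  intros [l1 [Hnd1 [Hin1 ->]]] [l2 [Hnd2 [Hin2 ->]]].
  apply lsum_perm, NoDup_Permutation; auto.
  intro c; rewrite <- Hin1, Hin2; tauto.
Qed.

Lemma PrSet_iff_eq {A X : Type} {P : list (step A X) -> Prop} {r0} :
  PrSet P r0 -> forall r, PrSet P r <-> r = r0.
Proof. intros H0 r; split; [intro H; exact (PrSet_unique _ _ _ H H0) | now intros ->]. Qed.

Lemma NoDup_flat_map {T U : Type} (g : T -> list U) l :
  NoDup l -> (forall x, In x l -> NoDup (g x)) ->
  (forall x y u, In x l -> In y l -> In u (g x) -> In u (g y) -> x = y) ->
  NoDup (flat_map g l).
Proof.
  induction 1 as [|x l Hx Hnd IH]; intros Hg Hdisj; simpl; [constructor|].
  apply NoDup_app.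
  - apply Hg; simpl; auto.
  - apply IH; [intros; apply Hg | intros; eapply Hdisj]; simpl; eauto.
  - intros u Hu Hu'; apply in_flat_map in Hu' as [y [Hy Hu']].
    assert (x = y) by (eapply Hdisj; simpl; eauto); subst; contradiction.
Qed.

Section Computations.
Context {A X : Type}.

Lemma comp_pr_nil : comp_pr (@nil (step A X)) = 1.
Proof. reflexivity. Qed.

Lemma comp_pr_cons (a : A) (pi : X -> R) x (c : list (step A X)) : comp_pr ((a, pi, x) :: c) = pi x * comp_pr c.
Proof. reflexivity. Qed.

Lemma comp_tr_cons (a : A) (pi : X -> R) x (c : list (step A X)) : comp_tr ((a, pi, x) :: c) = a :: comp_tr c.
Proof. reflexivity. Qed.

Lemma comp_pr_pos (tr : transrel A X) z c : is_comp tr z c -> 0 < comp_pr c.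
Proof.
  revert z; induction c as [|[[a pi] x] c IH]; intros z Hc; [exact Rlt_0_1|].
  destruct Hc as [_ [Hx Hc]]; rewrite comp_pr_cons.
  apply Rmult_lt_0_compat; eauto.
Qed.

Lemma comp_max_cons (tr : transrel A X) z a pi x c : tr z a pi -> 0 < pi x ->
  comp_max tr z ((a, pi, x) :: c) <-> comp_max tr x c.
Proof.
  intros Hz Hx; unfold comp_max; simpl; split.
  - intros [[_ [_ Hc]] Hext]; split; [exact Hc|].
    intros [d [Hd Hcd]]; apply Hext; exists d; auto.
  - intros [Hc Hext]; split; [auto|].
    intros [d [Hd Hcd]]; apply Hext; exists d; tauto.
Qed.

End Computations.

Definition deterministic {A X : Type} (tr : transrel A X) : Prop :=
  forall z a1 pi1 a2 pi2, tr z a1 pi1 -> tr z a2 pi2 -> a1 = a2 /\ pi1 = pi2.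

Definition depth_bounded {A X : Type} (tr : transrel A X) (n : nat) (z : X) : Prop :=
  forall c, is_comp tr z c -> (length c <= n)%nat.

Section Deterministic.
Context {A X : Type} (tr : transrel A X).
Hypothesis tr_pts : is_PTS tr.
Hypothesis tr_det : deterministic tr.

Definition next (z : X) : option (A * (X -> R)) :=
  match excluded_middle_informative (exists p : A * (X -> R), tr z (fst p) (snd p)) with
  | left H => Some (proj1_sig (constructive_indefinite_description _ H))
  | right _ => None
  end.

Lemma next_trans {z a pi} : next z = Some (a, pi) -> tr z a pi.
Proof.
  unfold next; destruct excluded_middle_informative; [|discriminate].
  destruct constructive_indefinite_description as [[a' pi'] H]; simpl.
  now intros [= -> ->].
Qed.

Lemma next_None z : next z = None -> forall a pi, ~ tr z a pi.
Proof.
  unfold next; destruct excluded_middle_informative as [|Hno]; [discriminate|].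
  intros _ a pi H; apply Hno; now exists (a, pi).
Qed.

Lemma next_of_trans z a pi : tr z a pi -> next z = Some (a, pi).
Proof.
  intro H; destruct (next z) as [[a' pi']|] eqn:E.
  - apply next_trans in E; destruct (tr_det _ _ _ _ _ H E); congruence.
  - exfalso; eapply next_None; eauto.
Qed.

Lemma comp_max_nil z : comp_max tr z [] <-> next z = None.
Proof.
  split.
  - intros [_ Hext]; destruct (next z) as [[a pi]|] eqn:E; [exfalso|reflexivity].
    apply next_trans in E; destruct (fdist_exists_pos pi (tr_pts _ _ _ E)) as [x Hx].
    apply Hext; exists [(a, pi, x)]; simpl; split; [discriminate | auto].
  - intro E; split; [exact I|].
    intros [[|[[a pi] x] d] [Hd Hc]]; [auto|].
    destruct Hc as [Hz _]; exact (next_None _ E _ _ Hz).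
Qed.

Lemma support_list_trans {z a pi x} :
  tr z a pi -> In x (support_list pi) <-> 0 < pi x.
Proof. intro Hz; apply (support_list_spec pi (tr_pts _ _ _ Hz)). Qed.

(* [comps_upto n z] only follows the transition chosen by [next]; it lists every
   computation from [z] exactly when [tr] is deterministic and [depth_bounded tr n z]. *)
Fixpoint comps_upto (n : nat) (z : X) : list (list (step A X)) :=
  match n with
  | O => [[]]
  | S m => [] :: match next z with
           | None => []
           | Some (a, pi) =>
               flat_map (fun x => map (cons (a, pi, x)) (comps_upto m x)) (support_list pi)
           end
  end.

Lemma depth_bounded_step m z a pi x :
  depth_bounded tr (S m) z -> tr z a pi -> 0 < pi x -> depth_bounded tr m x.
Proof.
  intros Hb Hz Hx c Hc; specialize (Hb ((a, pi, x) :: c)); simpl in Hb.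
  enough (S (length c) <= S m)%nat by lia; auto.
Qed.

Lemma depth_bounded_0_next z : depth_bounded tr 0 z -> next z = None.
Proof.
  intro Hb; destruct (next z) as [[a pi]|] eqn:E; [exfalso|reflexivity].
  apply next_trans in E; destruct (fdist_exists_pos pi (tr_pts _ _ _ E)) as [x Hx].
  specialize (Hb [(a, pi, x)]); simpl in Hb.
  enough (1 <= 0)%nat by lia; auto.
Qed.

Lemma comps_upto_is_comp n z c : In c (comps_upto n z) -> is_comp tr z c.
Proof.
  revert z c; induction n as [|m IH]; intros z c Hc; simpl in Hc.
  - destruct Hc as [<-|[]]; exact I.
  - destruct Hc as [<-|Hc]; [exact I|].
    destruct (next z) as [[a pi]|] eqn:E; [|destruct Hc].
    apply next_trans in E.
    apply in_flat_map in Hc as [x [Hx Hc]]; apply in_map_iff in Hc as [c' [<- Hc']].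
    repeat split; [exact E | now apply (support_list_trans E) | now apply IH].
Qed.

Lemma comps_upto_complete n z c :
  depth_bounded tr n z -> is_comp tr z c -> In c (comps_upto n z).
Proof.
  revert z c; induction n as [|m IH]; intros z c Hb Hc.
  - destruct c as [|st c]; [now left|].
    specialize (Hb _ Hc); simpl in Hb; lia.
  - destruct c as [|[[a pi] x] c]; [now left|right].
    destruct Hc as [Hz [Hx Hc]]; rewrite (next_of_trans _ _ _ Hz).
    apply in_flat_map; exists x; split; [now apply (support_list_trans Hz)|].
    apply in_map, IH; [eapply depth_bounded_step|]; eauto.
Qed.

Lemma comps_upto_NoDup n z : NoDup (comps_upto n z).
Proof.
  revert z; induction n as [|m IH]; intro z; simpl.
  - repeat constructor; simpl; tauto.
  - constructor.
    + destruct (next z) as [[a pi]|]; [|simpl; tauto].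
      rewrite in_flat_map; intros [x [_ Hx]]; apply in_map_iff in Hx as [c [Hc _]].
      discriminate.
    + destruct (next z) as [[a pi]|] eqn:E; [|constructor].
      apply next_trans in E; apply NoDup_flat_map.
      * apply (support_list_spec pi (tr_pts _ _ _ E)).
      * intros x _; apply FinFun.Injective_map_NoDup; [|apply IH].
        now intros c1 c2 [= ->].
      * intros x y c _ _ Hx Hy; apply in_map_iff in Hx as [? [<- _]].
        now apply in_map_iff in Hy as [? [[= ->] _]].
Qed.

Lemma lsum_comps_upto_S m z (f : list (step A X) -> R) :
  lsum f (comps_upto (S m) z) = f [] +
    match next z with
    | None => 0
    | Some (a, pi) =>
        lsum (fun x => lsum (fun c => f ((a, pi, x) :: c)) (comps_upto m x)) (support_list pi)
    end.
Proof.
  cbn [comps_upto]; rewrite lsum_cons; destruct (next z) as [[a pi]|]; [|reflexivity].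
  rewrite lsum_flat_map; f_equal; apply lsum_ext_in; intros x _; apply lsum_map.
Qed.

Lemma lsum_support_mulr_const {z a pi} {f : X -> R} k : tr z a pi ->
  (forall x, 0 < pi x -> f x = k) -> lsum (fun x => pi x * f x) (support_list pi) = k.
Proof.
  intros Hz Hf; destruct (support_list_spec pi (tr_pts _ _ _ Hz)) as [_ [Hin Hsum]].
  rewrite (lsum_ext_in _ (fun x => k * pi x)), lsum_scal, Hsum; [ring|].
  intros x Hx; rewrite Hf by (now apply Hin); ring.
Qed.

Lemma lsum_support_ext {z a pi} {f g : X -> R} : tr z a pi ->
  (forall x, 0 < pi x -> f x = g x) -> lsum f (support_list pi) = lsum g (support_list pi).
Proof. intros Hz Hfg; apply lsum_ext_in; intros x Hx; now apply Hfg, (support_list_trans Hz). Qed.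

Definition pr_trace n z (Q : list A -> Prop) : R :=
  lsum (fun c => indic (Q (comp_tr c)) (comp_pr c)) (comps_upto n z).

Definition pr_max n z (Q : list A -> Prop) : R :=
  lsum (fun c => indic (Q (comp_tr c)) (indic (comp_max tr z c) (comp_pr c))) (comps_upto n z).

Lemma pr_trace_0 z Q : pr_trace 0 z Q = indic (Q []) 1.
Proof. unfold pr_trace; cbn [comps_upto]; rewrite lsum_cons, lsum_nil, comp_pr_nil, Rplus_0_r; reflexivity. Qed.

Lemma pr_max_0 z Q : depth_bounded tr 0 z -> pr_max 0 z Q = indic (Q []) 1.
Proof.
  intro Hb; unfold pr_max; cbn [comps_upto]; rewrite lsum_cons, lsum_nil, comp_pr_nil.
  rewrite (indic_T (comp_max _ _ _)), Rplus_0_r by now apply comp_max_nil, depth_bounded_0_next.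
  reflexivity.
Qed.

Lemma pr_trace_S m z Q : pr_trace (S m) z Q = indic (Q []) 1 +
  match next z with
  | None => 0
  | Some (a, pi) =>
      lsum (fun x => pi x * pr_trace m x (fun b => Q (a :: b))) (support_list pi)
  end.
Proof.
  unfold pr_trace; rewrite lsum_comps_upto_S, comp_pr_nil; f_equal.
  destruct (next z) as [[a pi]|]; [|reflexivity].
  apply lsum_ext_in; intros x _; rewrite <- lsum_scal; apply lsum_ext_in; intros c _.
  now rewrite comp_pr_cons, comp_tr_cons, indic_mulr.
Qed.

Lemma pr_max_S m z Q : pr_max (S m) z Q =
  match next z with
  | None => indic (Q []) 1
  | Some (a, pi) =>
      lsum (fun x => pi x * pr_max m x (fun b => Q (a :: b))) (support_list pi)
  end.
Proof.
  unfold pr_max; rewrite lsum_comps_upto_S, comp_pr_nil.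
  destruct (next z) as [[a pi]|] eqn:E.
  - rewrite (indic_F (comp_max _ _ _)), indic_0, Rplus_0_l by
      (rewrite comp_max_nil; congruence).
    apply next_trans in E; apply (lsum_support_ext E); intros x Hx.
    rewrite <- lsum_scal; apply lsum_ext_in; intros c _.
    rewrite comp_pr_cons, comp_tr_cons, !indic_mulr.
    now rewrite (indic_iff (comp_max _ _ _) (comp_max tr x c)) by now apply comp_max_cons.
  - rewrite (indic_T (comp_max _ _ _)), Rplus_0_r by now apply comp_max_nil.
    reflexivity.
Qed.

Lemma pr_trace_ext n z Q Q' : (forall b, Q b <-> Q' b) -> pr_trace n z Q = pr_trace n z Q'.
Proof. intro H; apply lsum_ext_in; intros c _; now apply indic_iff. Qed.

Lemma pr_max_ext n z Q Q' : (forall b, Q b <-> Q' b) -> pr_max n z Q = pr_max n z Q'.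
Proof. intro H; apply lsum_ext_in; intros c _; now apply indic_iff. Qed.

Lemma pr_trace_False n z Q : (forall b, ~ Q b) -> pr_trace n z Q = 0.
Proof. intro H; apply lsum_zero; intros c _; now apply indic_F. Qed.

Lemma pr_max_False n z Q : (forall b, ~ Q b) -> pr_max n z Q = 0.
Proof. intro H; apply lsum_zero; intros c _; now apply indic_F. Qed.

Lemma pr_max_ge0 n z Q : 0 <= pr_max n z Q.
Proof.
  apply lsum_ge0; intros c Hc; apply indic_ge0, indic_ge0, Rlt_le.
  eapply comp_pr_pos, comps_upto_is_comp, Hc.
Qed.

Lemma pr_max_mono n z (Q Q' : list A -> Prop) :
  (forall b, Q b -> Q' b) -> pr_max n z Q <= pr_max n z Q'.
Proof.
  intro H; apply lsum_le; intros c Hc; apply indic_mono; [apply H|].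
  apply indic_ge0, Rlt_le; eapply comp_pr_pos, comps_upto_is_comp, Hc.
Qed.

Lemma pr_trace_nil n z : pr_trace n z (fun b => b = []) = 1.
Proof.
  destruct n as [|m]; [rewrite pr_trace_0; now apply indic_T|].
  rewrite pr_trace_S, indic_T by reflexivity.
  destruct (next z) as [[a pi]|] eqn:E; [|ring].
  rewrite (lsum_support_mulr_const 0 (next_trans E)); [ring|].
  intros x _; now apply pr_trace_False.
Qed.

Lemma pr_trace_eq_pr_max_prefix n z al : depth_bounded tr n z ->
  pr_trace n z (fun b => b = al) = pr_max n z (fun b => exists d, b = al ++ d).
Proof.
  assert (Hnil : forall be : list A, [] = be <-> exists d, [] = be ++ d).
  { intros [|a be]; split; [now exists [] | reflexivity | discriminate |].
    intros [d Hd]; discriminate. }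
  revert z al; induction n as [|m IH]; intros z al Hb.
  { rewrite pr_trace_0, pr_max_0 by exact Hb; now apply indic_iff. }
  rewrite pr_trace_S, pr_max_S; destruct (next z) as [[a pi]|] eqn:E.
  2:{ rewrite Rplus_0_r; now apply indic_iff. }
  apply next_trans in E.
  assert (IHx : forall x al, 0 < pi x ->
    pr_trace m x (fun b => b = al) = pr_max m x (fun b => exists d, b = al ++ d))
    by (intros; apply IH; eapply depth_bounded_step; eauto).
  destruct al as [|b al].
  - rewrite indic_T by reflexivity.
    rewrite (lsum_support_mulr_const 0 E)
      by (intros; apply pr_trace_False; intros ? ?; discriminate).
    rewrite (lsum_support_mulr_const 1 E); [ring|].
    intros x Hx; rewrite <- (pr_trace_nil m x), IHx by exact Hx.
    apply pr_max_ext; intro c; split; intros _; [exists c | exists (a :: c)]; reflexivity.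
  - rewrite indic_F, Rplus_0_l by discriminate.
    apply (lsum_support_ext E); intros x Hx; f_equal.
    destruct (classic (a = b)) as [<-|Hab].
    + rewrite (pr_trace_ext _ _ _ (fun c => c = al))
        by (intro c; split; [intros [= ->] | intros ->]; reflexivity).
      rewrite IHx by exact Hx.
      apply pr_max_ext; intro c; split; intros [d Hd]; exists d; simpl in *; congruence.
    + rewrite pr_trace_False, pr_max_False; [reflexivity | intros c [d Hd] | intros c Hc];
        simpl in *; congruence.
Qed.

(* A non-maximal computation with trace [al] passes its whole mass on to its
   one-step extensions, whose traces are the [al ++ [e]]. *)
Lemma pr_max_eq_pr_trace_sub n z al : depth_bounded tr n z ->
  pr_max n z (fun b => b = al) =
  pr_trace n z (fun b => b = al) - pr_trace n z (fun b => exists e, b = al ++ [e]).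
Proof.
  assert (Hsnoc : forall be : list A, ~ exists e, [] = be ++ [e]).
  { intros be [e He]; exact (app_cons_not_nil _ _ _ He). }
  revert z al; induction n as [|m IH]; intros z al Hb.
  { rewrite pr_max_0, !pr_trace_0, (indic_F (exists e, _)) by auto; ring. }
  rewrite pr_max_S, !pr_trace_S, (indic_F (exists e, _)) by auto.
  destruct (next z) as [[a pi]|] eqn:E; [|ring].
  apply next_trans in E.
  destruct al as [|b al].
  - rewrite indic_T by reflexivity.
    rewrite (lsum_support_mulr_const 0 E)
      by (intros; apply pr_max_False; intros ? ?; discriminate).
    rewrite (lsum_support_mulr_const 0 E)
      by (intros; apply pr_trace_False; intros ? ?; discriminate).
    rewrite (lsum_support_mulr_const 1 E); [ring|].
    intros x _; rewrite <- (pr_trace_nil m x); apply pr_trace_ext.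
    intro c; split; [intros [e [= -> ->]] | intros ->; now exists a]; reflexivity.
  - rewrite indic_F, !Rplus_0_l, <- lsum_minus by discriminate.
    apply (lsum_support_ext E); intros x Hx; rewrite <- Rmult_minus_distr_l; f_equal.
    destruct (classic (a = b)) as [<-|Hab].
    + assert (Heq : forall c, a :: c = a :: al <-> c = al)
        by (intro c; split; [intros [= ->] | intros ->]; reflexivity).
      assert (Hext : forall c, (exists e, a :: c = (a :: al) ++ [e]) <-> exists e, c = al ++ [e])
        by (intro c; split; intros [e He]; exists e; simpl in *; congruence).
      rewrite (pr_max_ext _ _ _ _ Heq), (pr_trace_ext _ _ _ _ Heq), (pr_trace_ext _ _ _ _ Hext).
      apply IH; eapply depth_bounded_step; eauto.
    + rewrite pr_max_False, !pr_trace_False; [ring | intros c [e He] | intros c Hc ..];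
        simpl in *; congruence.
Qed.

Lemma pr_max_total n z : depth_bounded tr n z -> pr_max n z (fun _ => True) = 1.
Proof.
  intro Hb; rewrite <- (pr_trace_nil n z), pr_trace_eq_pr_max_prefix by exact Hb.
  apply pr_max_ext; intro c; split; intros _; [now exists c | exact I].
Qed.

Lemma pr_max_In n z ks : NoDup ks ->
  pr_max n z (fun b => In b ks) = lsum (fun al => pr_max n z (fun b => b = al)) ks.
Proof. unfold pr_max; apply lsum_indic_in_fibres. Qed.

Lemma lsum_pr_max_le n z ks : depth_bounded tr n z -> NoDup ks ->
  lsum (fun al => pr_max n z (fun b => b = al)) ks <= 1.
Proof.
  intros Hb Hks; rewrite <- pr_max_In, <- (pr_max_total n z Hb) by exact Hks.
  now apply pr_max_mono.
Qed.

Lemma pr_max_fdist n z : depth_bounded tr n z ->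
  is_fdist (fun al => pr_max n z (fun b => b = al)).
Proof.
  intro Hb; split; [intro; apply pr_max_ge0|].
  set (ks := nodup deceq (map (@comp_tr A X) (comps_upto n z))).
  assert (Hks : forall al, In al ks <-> exists c, comp_tr c = al /\ In c (comps_upto n z))
    by (intro; unfold ks; now rewrite nodup_In, in_map_iff).
  exists ks; split; [apply NoDup_nodup | split].
  - intros al Hal; apply Hks, NNPP; intro Hno; apply Hal, lsum_zero; intros c Hc.
    apply indic_F; intro; apply Hno; eauto.
  - rewrite <- pr_max_In, <- (pr_max_total n z Hb) by apply NoDup_nodup.
    apply lsum_ext_in; intros c Hc; apply indic_iff; rewrite Hks; split; eauto.
Qed.
End Deterministic.

Fixpoint formula_trace {A : Type} (f : tformula A) : list A :=
  match f with
  | TTop _ => []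
  | TDiam a f' => a :: formula_trace f'
  end.

Definition trace_formula {A : Type} (al : list A) : tformula A :=
  fold_right (@TDiam A) (TTop A) al.

Lemma formula_trace_trace_formula {A : Type} (al : list A) :
  formula_trace (trace_formula al) = al.
Proof. induction al as [|a al IH]; simpl; congruence. Qed.

Lemma csat_depth_iff {A X : Type} (f : tformula A) (c : list (step A X)) :
  csat c f /\ length c = depth f <-> comp_tr c = formula_trace f.
Proof.
  revert c; induction f as [|a f IH]; intros [|[[a' pi] x] c];
    cbn [csat length depth formula_trace].
  - split; intros; [reflexivity | split; [exact I | reflexivity]].
  - split; [intros [_ H] | intro H]; discriminate.
  - split; [tauto | discriminate].
  - change (comp_tr ((a', pi, x) :: c)) with (a' :: comp_tr c); split.
    + intros [[-> Hc] [= Hl]]; f_equal; now apply IH.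
    + intros [= -> Hc]; apply IH in Hc as [Hc ->]; auto.
Qed.

Section Probabilities.
Context {A X : Type} {tr : transrel A X}.
Hypothesis tr_pts : is_PTS tr.
Hypothesis tr_det : deterministic tr.

Lemma PrSet_Ctr {n z} al : depth_bounded tr n z ->
  PrSet (Ctr tr z al) (pr_trace tr n z (fun b => b = al)).
Proof.
  intro Hb; unfold pr_trace.
  rewrite (lsum_ext_in _ (fun c => indic (Ctr tr z al c) (comp_pr c))).
  - apply PrSet_lsum_indic; [apply comps_upto_NoDup; auto|].
    intros c [Hc _]; now apply comps_upto_complete.
  - intros c Hc; apply indic_iff; unfold Ctr.
    pose proof (comps_upto_is_comp tr tr_pts _ _ _ Hc); tauto.
Qed.

Lemma PrSet_max_formula {n z} f : depth_bounded tr n z ->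
  PrSet (fun c => comp_max tr z c /\ csat c f /\ length c = depth f)
        (pr_max tr n z (fun b => b = formula_trace f)).
Proof.
  intro Hb; unfold pr_max.
  rewrite (lsum_ext_in _
    (fun c => indic (comp_max tr z c /\ csat c f /\ length c = depth f) (comp_pr c))).
  - apply PrSet_lsum_indic; [apply comps_upto_NoDup; auto|].
    intros c [[Hc _] _]; now apply comps_upto_complete.
  - intros c _; rewrite <- indic_and; apply indic_iff.
    rewrite csat_depth_iff; tauto.
Qed.

End Probabilities.

Section TwoPTS.
Context {A X1 X2 : Type} {tr1 : transrel A X1} {tr2 : transrel A X2}.
Context {n1 n2 : nat} {z1 : X1} {z2 : X2}.
Hypotheses (pts1 : is_PTS tr1) (bnd1 : depth_bounded tr1 n1 z1).
Hypotheses (pts2 : is_PTS tr2) (bnd2 : depth_bounded tr2 n2 z2).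

Lemma pr_trace_agree_all :
  (forall al, pr_trace tr1 n1 z1 (fun b => b = al) = pr_trace tr2 n2 z2 (fun b => b = al)) ->
  forall Q, pr_trace tr1 n1 z1 Q = pr_trace tr2 n2 z2 Q.
Proof. exact (lsum_indic_eq_of_fibres_eq _ _ _ _ _ _). Qed.

Lemma pr_max_agree_all :
  (forall al, pr_max tr1 n1 z1 (fun b => b = al) = pr_max tr2 n2 z2 (fun b => b = al)) ->
  forall Q, pr_max tr1 n1 z1 Q = pr_max tr2 n2 z2 Q.
Proof. exact (lsum_indic_eq_of_fibres_eq _ _ _ _ _ _). Qed.

Lemma pr_max_agree_of_pr_trace_agree :
  (forall al, pr_trace tr1 n1 z1 (fun b => b = al) = pr_trace tr2 n2 z2 (fun b => b = al)) ->
  forall al, pr_max tr1 n1 z1 (fun b => b = al) = pr_max tr2 n2 z2 (fun b => b = al).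
Proof.
  intros H al; rewrite !pr_max_eq_pr_trace_sub by assumption.
  now rewrite !(pr_trace_agree_all H).
Qed.

Lemma pr_trace_agree_of_pr_max_agree :
  (forall al, pr_max tr1 n1 z1 (fun b => b = al) = pr_max tr2 n2 z2 (fun b => b = al)) ->
  forall al, pr_trace tr1 n1 z1 (fun b => b = al) = pr_trace tr2 n2 z2 (fun b => b = al).
Proof.
  intros H al; rewrite !pr_trace_eq_pr_max_prefix by assumption.
  now apply pr_max_agree_all.
Qed.

End TwoPTS.

Definition dist_formula {A : Type} (mu : list A -> R) : tdformula A :=
  map (fun al => (mu al, trace_formula al)) (support_list mu).

Lemma In_dist_formula {A : Type} (mu : list A -> R) r f : is_fdist mu ->
  In (r, f) (dist_formula mu) <-> exists al, 0 < mu al /\ r = mu al /\ f = trace_formula al.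
Proof.
  intro Hmu; destruct (support_list_spec mu Hmu) as [_ [Hin _]].
  unfold dist_formula; rewrite in_map_iff; split.
  - intros [al [[= <- <-] Hal]]; exists al; split; [now apply Hin | split; reflexivity].
  - intros [al [Hal [-> ->]]]; exists al; split; [reflexivity | now apply Hin].
Qed.

Lemma wf_dist_formula {A : Type} (mu : list A -> R) : is_fdist mu ->
  wf_tdformula (dist_formula mu).
Proof.
  intro Hmu; destruct (support_list_spec mu Hmu) as [Hnd [Hin Hsum]].
  unfold wf_tdformula, dist_formula; split; [|split; [|split]].
  - intro Hnil; apply map_eq_nil in Hnil; rewrite Hnil, lsum_nil in Hsum; lra.
  - rewrite map_map; apply FinFun.Injective_map_NoDup; [|exact Hnd].
    intros al be Heq; simpl in Heq.
    now rewrite <- (formula_trace_trace_formula al), Heq, formula_trace_trace_formula.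
  - intros r f Hrf; apply in_map_iff in Hrf as [al [[= <- _] Hal]].
    split; [now apply Hin|]; rewrite <- Hsum.
    apply lsum_in_le; [intros; apply Hmu | exact Hal].
  - now rewrite lsum_map.
Qed.

Section Resolutions.
Context {St A : Type} (trans : transrel A St).

Lemma reach_snoc u v w : reach trans u v -> succ trans v w -> reach trans u w.
Proof. induction 1; intro Hvw; econstructor; eauto; constructor. Qed.

Lemma reach_trans u v w : reach trans u v -> reach trans v w -> reach trans u w.
Proof. induction 1; auto; intro; econstructor; eauto. Qed.

Lemma reach_plus_reach u w : reach_plus trans u w -> reach trans u w.
Proof. intros [v [Huv Hvw]]; econstructor; eauto. Qed.

(* Computations of a resolution project to paths of [trans]; below an acyclic
   [s] these visit pairwise distinct states. *)
Lemma resolution_path_NoDup {s} (Z : resolution trans s) :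
  (forall u, reach trans s u -> ~ reach_plus trans u u) ->
  forall c z, is_comp (rtrans Z) z c -> reach trans s (rcorr Z z) ->
  NoDup (rcorr Z z :: map (fun st => rcorr Z (snd st)) c) /\
  (forall y, In y (map (fun st => rcorr Z (snd st)) c) -> reach_plus trans (rcorr Z z) y).
Proof.
  intro Hacyc; induction c as [|[[a pi] x] c IH]; intros z Hc Hr.
  { split; [repeat constructor; simpl; tauto | simpl; tauto]. }
  destruct Hc as [Hz [Hx Hc]].
  destruct (r_match Z _ _ _ Hz) as [pi' [Hz' Hpi]].
  assert (Hsucc : succ trans (rcorr Z z) (rcorr Z x))
    by (exists a, pi'; rewrite <- Hpi; auto).
  destruct (IH x Hc (reach_snoc _ _ _ Hr Hsucc)) as [Hnd Hplus].
  assert (Hall : forall y, In y (rcorr Z x :: map (fun st => rcorr Z (snd st)) c) ->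
                 reach_plus trans (rcorr Z z) y).
  { intros y [<-|Hy]; exists (rcorr Z x); split; auto.
    - constructor.
    - apply reach_plus_reach, Hplus, Hy. }
  split; [|exact Hall].
  constructor; [|exact Hnd].
  intro Hin; exact (Hacyc _ Hr (Hall _ Hin)).
Qed.

Lemma resolution_depth_bounded {s} (Z : resolution trans s) :
  finite_proc trans s -> exists n, depth_bounded (rtrans Z) n (rinit Z).
Proof.
  intros [[l Hl] [_ Hacyc]]; exists (length l); intros c Hc.
  assert (Hr : reach trans s (rcorr Z (rinit Z))) by (rewrite r_init_corr; constructor).
  destruct (resolution_path_NoDup Z Hacyc c _ Hc Hr) as [Hnd Hplus].
  assert (Hincl : incl (rcorr Z (rinit Z) :: map (fun st => rcorr Z (snd st)) c) l).
  { intros y [<-|Hy]; apply Hl; [exact Hr|].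
    eapply reach_trans; [exact Hr | apply reach_plus_reach, Hplus, Hy]. }
  pose proof (NoDup_incl_length Hnd Hincl) as Hlen; simpl in Hlen.
  rewrite length_map in Hlen; exact (Nat.lt_le_incl _ _ Hlen).
Qed.

Lemma Lset_incl_of_res_trace_matched s t :
  finite_proc trans s -> finite_proc trans t -> res_trace_matched trans s t ->
  forall F, Lset trans s F -> Lset trans t F.
Proof.
  intros Hs Ht Hmatch F [Hwf [Zs HZs]].
  destruct (Hmatch Zs) as [Zt HZt].
  destruct (resolution_depth_bounded Zs Hs) as [ns Hns].
  destruct (resolution_depth_bounded Zt Ht) as [nt Hnt].
  pose proof (pr_max_agree_of_pr_trace_agree (r_pts Zs) Hns (r_pts Zt) Hnt) as Hagree.
  split; [exact Hwf|]; exists Zt; intros r f Hrf.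
  apply (PrSet_iff_eq (PrSet_max_formula (r_pts Zt) (r_det Zt) f Hnt)).
  rewrite <- Hagree.
  - apply (PrSet_iff_eq (PrSet_max_formula (r_pts Zs) (r_det Zs) f Hns)), HZs, Hrf.
  - intro al; destruct (HZt al) as [r' [Hrs Hrt]].
    apply (PrSet_iff_eq (PrSet_Ctr (r_pts Zs) (r_det Zs) al Hns)) in Hrs.
    apply (PrSet_iff_eq (PrSet_Ctr (r_pts Zt) (r_det Zt) al Hnt)) in Hrt.
    congruence.
Qed.

Lemma res_trace_matched_of_Lset_incl s t :
  finite_proc trans s -> finite_proc trans t ->
  (forall F, Lset trans s F -> Lset trans t F) -> res_trace_matched trans s t.
Proof.
  intros Hs Ht Hincl Zs.
  destruct (resolution_depth_bounded Zs Hs) as [ns Hns].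
  set (Ms := fun al => pr_max (rtrans Zs) ns (rinit Zs) (fun b => b = al)).
  assert (HMs : is_fdist Ms) by exact (pr_max_fdist _ (r_pts Zs) _ _ Hns).
  destruct (Hincl (dist_formula Ms)) as [_ [Zt HZt]].
  { split; [now apply wf_dist_formula|]; exists Zs; intros r f Hrf.
    apply In_dist_formula in Hrf as [al [_ [-> ->]]]; [|exact HMs].
    apply (PrSet_iff_eq (PrSet_max_formula (r_pts Zs) (r_det Zs) _ Hns)).
    now rewrite formula_trace_trace_formula. }
  destruct (resolution_depth_bounded Zt Ht) as [nt Hnt].
  assert (Hmax : forall al, pr_max (rtrans Zt) nt (rinit Zt) (fun b => b = al) = Ms al).
  { apply (fdist_eq_of_eq_on_support _ _ HMs).
    - intro; apply pr_max_ge0, r_pts.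
    - intros l Hl; exact (lsum_pr_max_le _ (r_pts Zt) _ _ _ Hnt Hl).
    - intros al Hal; symmetry.
      assert (Hin : In (Ms al, trace_formula al) (dist_formula Ms))
        by (apply In_dist_formula; eauto).
      pose proof (HZt _ _ Hin) as H.
      apply (PrSet_iff_eq (PrSet_max_formula (r_pts Zt) (r_det Zt) _ Hnt)) in H.
      now rewrite formula_trace_trace_formula in H. }
  exists Zt; intro al; exists (pr_trace (rtrans Zs) ns (rinit Zs) (fun b => b = al)).
  split; [exact (PrSet_Ctr (r_pts Zs) (r_det Zs) al Hns)|].
  apply (PrSet_iff_eq (PrSet_Ctr (r_pts Zt) (r_det Zt) al Hnt)).
  apply (pr_trace_agree_of_pr_max_agree (r_pts Zs) Hns (r_pts Zt) Hnt).
  intro; symmetry; apply Hmax.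
Qed.

End Resolutions.

Theorem theorem10 (S A : Type) (trans : transrel A S)
  (Hpts : is_PTS trans) (Himg : image_finite trans)
  (s t : S) (Hs : finite_proc trans s) (Ht : finite_proc trans t) :
  sptrace_equiv trans s t <-> (forall F, Lset trans s F <-> Lset trans t F).
Proof.
  split.
  - intros [Hst Hts] F; split; apply Lset_incl_of_res_trace_matched; assumption.
  - intro HL; split; apply res_trace_matched_of_Lset_incl; auto; intro F; apply HL.
Qed.
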